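(* Let $p$ be a prime and $d>1$. Let $h^{\mathrm u}_{p,d}$ (resp. $h^{\mathrm l}_{p,d}$) be the number of unitary equivalence classes of frames $\Phi_J$ with $J\subset\mathbb{Z}_p$ a $d$-element subset with $0\notin J$ (resp. $0\in J$). Then $$h^{\mathrm u}_{p,d}=\frac{1}{p-1}\sum_{j\mid\gcd(p-1,d)}\binom{(p-1)/j}{d/j}\varphi(j),\qquad h^{\mathrm l}_{p,d}=\frac{1}{p-1}\sum_{j\mid\gcd(p-1,d-1)}\binom{(p-1)/j}{(d-1)/j}\varphi(j),$$ where $\varphi$ is Euler's totient function. (The formula for $h^{\mathrm u}_{p,d}$ also holds for $d=1$.)
   Context: Let $\omega=e^{2\pi i/p}$. For a $d$-element subset $J\subset\mathbb{Z}_p$, the cyclic harmonic frame $\Phi_J$ is the sequence $(v_k)_{k\in\mathbb{Z}_p}$ with $v_k=(\omega^{jk})_{j\in J}\in\mathbb{C}^J\cong\mathbb{C}^d$. Two finite sequences $(v_k)_{k\in I}$, $(w_k)_{k\in I'}$ in $\mathbb{C}^d$ are unitarily equivalent if there is a unitary $U$ and a bijection $\sigma:I\to I'$ with $v_k=Uw_{\sigma(k)}$ for all $k$. Frames $\Phi_J$ with $0\in J$ are called lifted, those with $0\notin J$ unlifted. *)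

From HB Require Import structures.
From mathcomp Require Import all_boot all_order all_algebra all_fingroup all_field.
From mathcomp Require Import spectral.
From Stdlib Require Import ClassicalEpsilon.
Set Implicit Arguments. Unset Strict Implicit. Unset Printing Implicit Defensive.
Import Order.TTheory GRing.Theory Num.Theory.
Local Open Scope ring_scope.

(* omega = e^{2 pi i / p} in the algebraic complex numbers algC:
   p.-root (-1) is the p-th root of -1 of minimal nonnegative argument,
   i.e. e^{i pi / p}; its square is e^{2 pi i / p}. *)
Definition omega (p : nat) : algC := (p.-root (-1)) ^+ 2.

(* The k-th vector of the cyclic harmonic frame Phi_J in C^J ~ C^d,
   where the coordinates are indexed by the elements of J listed in
   increasing order (enum J); d is intended to be #|J|. *)
Definition harm_vec (p d : nat) (J : {set 'I_p}) (k : 'I_p) : 'cV[algC]_d :=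
  \col_(i < d) omega p ^+ (nth 0%N (map val (enum J)) i * k).

Definition unit_equiv (p d : nat) (v w : 'I_p -> 'cV[algC]_d) : Prop :=
  exists (U : 'M[algC]_d) (sigma : {perm 'I_p}),
    U \is unitarymx /\ forall k, v k = U *m w (sigma k).

Definition asbool (P : Prop) : bool :=
  if excluded_middle_informative P then true else false.

Definition frame_equiv (p d : nat) (J K : {set 'I_p}) : bool :=
  asbool (unit_equiv (harm_vec d J) (harm_vec d K)).

Definition unlifted_sets (p d : nat) : {set {set 'I_p}} :=
  [set J : {set 'I_p} | (#|J| == d) && [forall i : 'I_p, (i \in J) ==> (val i != 0%N)]].
Definition lifted_sets (p d : nat) : {set {set 'I_p}} :=
  [set J : {set 'I_p} | (#|J| == d) && [exists i : 'I_p, (i \in J) && (val i == 0%N)]].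

Definition num_classes (p d : nat) (S : {set {set 'I_p}}) : nat :=
  #|[set [set K in S | frame_equiv d J K] | J in S]|.

Definition h_unlifted (p d : nat) : nat := num_classes d (unlifted_sets p d).
Definition h_lifted (p d : nat) : nat := num_classes d (lifted_sets p d).

Definition hformula (p e : nat) : rat :=
  ((p.-1)%:R)^-1 *
  (\sum_(j <- divisors (gcdn p.-1 e)) ('C(p.-1 %/ j, e %/ j) * totient j)%N%:R).

(* Phi_J and Phi_K are unitarily equivalent iff K = a J for a unit a of Z_p.
   An equivalence preserves the Gram entry <v_0, v_1>, so the power sum
   sum_(x in J) w^x equals sum_(y in K) w^(c y) with p not dividing c; the
   Galois automorphisms w |-> w^m of Q(w) then match all power sums, and Fourier
   inversion on Z_p gives J = c K.  Conversely a dilation is realised by a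
   permutation matrix.  So h^u and h^l count the orbits of the cyclic group
   (Z/p)^* on d-subsets avoiding (resp. containing) 0, and Burnside's lemma
   applies: a unit u of order j fixes exactly the unions of <u>-orbits of
   nonzero residues, each of size j, i.e. 'C((p-1)/j, d/j) subsets when j | d. *)

From HB Require Import structures.
From mathcomp Require Import all_boot all_order all_algebra all_fingroup all_field.
From mathcomp Require Import all_solvable.
From mathcomp Require Import spectral zify.
From Stdlib Require Import ClassicalEpsilon.
Set Implicit Arguments. Unset Strict Implicit. Unset Printing Implicit Defensive.
Import Order.TTheory GRing.Theory Num.Theory.
Local Open Scope ring_scope.

Section PrimitiveRoot.
Variable p : nat.
Hypothesis p_pr : prime p.
Local Notation w := (omega p).

Lemma omega_prim : p.-primitive_root w.
Proof.
have p_gt0 := prime_gt0 p_pr.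
have rootp : (p.-root (-1 : algC)) ^+ p = -1 by rewrite rootCK.
have wp : w ^+ p = 1 by rewrite /omega -exprM mulnC exprM rootp sqrrN expr1n.
have [m prim_m m_dvd_p] := prim_order_exists p_gt0 wp.
suff m_neq1 : m != 1%N by move: prim_m; rewrite (elimT (prime_nt_dvdP p_pr m_neq1) m_dvd_p).
apply/eqP => m1; move: (prim_expr_order prim_m); rewrite m1 expr1 /omega.
move/eqP; rewrite sqrf_eq1 => /orP[] /eqP r1.
  by move: rootp; rewrite r1 expr1n => /eqP; rewrite -addr_eq0 -mulr2n pnatr_eq0.
by have := rootC_lt0 (-1 : algC) (prime_gt1 p_pr); rewrite r1 ltrN10.
Qed.

Lemma normr_omega : `|w| = 1.
Proof.
apply/eqP; rewrite -(@pexpr_eq1 _ _ p) ?normr_ge0 ?prime_gt0 //.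
by rewrite -normrX (prim_expr_order omega_prim) normr1.
Qed.

Lemma conj_omega_expr k : (w ^+ k)^* = w ^+ (k * p.-1).
Proof.
have w_neq0 : w != 0 by rewrite (prim_root_eq0 omega_prim) -lt0n prime_gt0.
rewrite rmorphXn /= mulnC exprM; congr (_ ^+ k); apply: (mulIf w_neq0).
rewrite mulrC -normCK normr_omega expr1n -exprSr prednK ?prime_gt0 //.
by rewrite (prim_expr_order omega_prim).
Qed.

Lemma sum_omega_expr t :
  \sum_(m < p) w ^+ (t * m) = if (p %| t)%N then p%:R else 0.
Proof.
case: ifPn => [p_dvd_t|p_ndvd_t].
  rewrite (eq_bigr (fun _ => 1)) ?sumr_const ?card_ord // => m _.
  by apply/eqP; rewrite -(prim_order_dvd omega_prim) dvdn_mulr.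
have : (w ^+ t - 1) * \sum_(m < p) w ^+ (t * m) = 0.
  under eq_bigr do rewrite exprM.
  by rewrite -subrX1 -exprM mulnC exprM (prim_expr_order omega_prim) expr1n subrr.
move/eqP; rewrite mulf_eq0 subr_eq0 -(prim_order_dvd omega_prim).
by rewrite (negPf p_ndvd_t) => /eqP.
Qed.

End PrimitiveRoot.

Lemma dvdn_add_sub (p a b : nat) :
  (a < p)%N -> (b < p)%N -> (p %| a + (p - b))%N = (a == b).
Proof.
move=> a_lt b_lt; apply/idP/eqP => [/dvdnP [k ek]|->].
  by case: k ek => [|[|k]] ek; lia.
by rewrite subnKC ?dvdnn // ltnW.
Qed.

Section PowerSums.
Variable n : nat.
Local Notation p := n.+2.
Hypothesis p_pr : prime p.
Local Notation w := (omega p).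

Lemma unit_Zp_prime (x : 'I_p) : (x \is a GRing.unit) = (x != 0).
Proof.
have := @unitZpE p x isT; rewrite natr_Zp => ->.
rewrite prime_coprime // -val_eqE /=; apply/idP/idP; apply: contra.
  by move/eqP ->; rewrite dvdn0.
by move/dvdnP => [[|k] ek]; have := ltn_ord x; rewrite ek //= mulSn; lia.
Qed.

Definition power_sum (K : {set 'I_p}) (m : nat) : algC := \sum_(y in K) w ^+ (y * m).

Lemma power_sum_inversion (K : {set 'I_p}) (z : 'I_p) :
  \sum_(m < p) power_sum K m * w ^+ ((p - z) * m) = if z \in K then p%:R else 0.
Proof.
have delta (y : 'I_p) :
    \sum_(m < p) w ^+ (y * m) * w ^+ ((p - z) * m) = if y == z then p%:R else 0.
  under eq_bigr do rewrite -exprD -mulnDl.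
  by rewrite (sum_omega_expr p_pr) (dvdn_add_sub (ltn_ord y) (ltn_ord z)).
under eq_bigr do rewrite mulr_suml.
rewrite exchange_big /=; under eq_bigr do rewrite delta.
have [zK|zK] := boolP (z \in K).
  by rewrite (bigD1 z) //= eqxx big1 ?addr0 // => y /andP[_ /negPf ->].
by rewrite big1 // => y yK; rewrite (negPf (memPn zK y yK)).
Qed.

Lemma eq_power_sum (J K : {set 'I_p}) :
  (forall m, power_sum J m = power_sum K m) -> J = K.
Proof.
move=> eqJK; apply/setP => z.
have := power_sum_inversion J z; under eq_bigr do rewrite eqJK.
rewrite power_sum_inversion.
by case: (z \in J); case: (z \in K) => // /eqP; rewrite ?pnatr_eq0 // eq_sym pnatr_eq0.
Qed.

Lemma eq_power_sum_mod (K : {set 'I_p}) m m' :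
  m = m' %[mod p] -> power_sum K m = power_sum K m'.
Proof.
move=> eq_mm'; apply: eq_bigr => y _; apply/eqP.
by rewrite (eq_prim_root_expr (omega_prim p_pr)) -modnMmr eq_mm' modnMmr.
Qed.

Lemma power_sum_dilation (K : {set 'I_p}) (a : 'I_p) m : a \is a GRing.unit ->
  power_sum [set y * a | y in K] m = power_sum K (a * m).
Proof.
move=> a_unit; rewrite /power_sum big_imset /=; last by move=> y y' _ _; apply: mulIr.
apply: eq_bigr => y _; apply/eqP.
by rewrite (eq_prim_root_expr (omega_prim p_pr)) /= modnMml mulnA.
Qed.

Lemma power_sum_galois (J K : {set 'I_p}) c : #|J| = #|K| ->
  power_sum J 1 = power_sum K c -> forall m, power_sum J m = power_sum K (c * m).
Proof.
move=> eq_card eqJK m; have [p_dvd_m|p_ndvd_m] := boolP (p %| m)%N.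
  have ps_card (L : {set 'I_p}) k : (p %| k)%N -> power_sum L k = #|L|%:R.
    move=> p_dvd_k; rewrite -sumr_const; apply: eq_bigr => y _; apply/eqP.
    by rewrite -(prim_order_dvd (omega_prim p_pr)) dvdn_mull.
  by rewrite !ps_card ?eq_card ?dvdn_mull.
have [u uE] : {u : {rmorphism algC -> algC} | forall z, z ^+ p = 1 -> u z = z ^+ m}.
  by apply: Qn_aut_exists; rewrite coprime_sym prime_coprime.
have u_power_sum (L : {set 'I_p}) k : u (power_sum L k) = power_sum L (k * m).
  rewrite rmorph_sum; apply: eq_bigr => y _; rewrite uE -exprM ?mulnA //.
  by rewrite mulnC exprM (prim_expr_order (omega_prim p_pr)) expr1n.
by move/(congr1 u): eqJK; rewrite !u_power_sum mul1n.
Qed.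

Lemma eq_power_sum1_dilation (J K : {set 'I_p}) (a : 'I_p) :
  a \is a GRing.unit -> #|J| = #|K| -> power_sum J 1 = power_sum K a ->
  J = [set y * a | y in K].
Proof.
move=> a_unit eq_card eqJK; apply: eq_power_sum => m.
by rewrite power_sum_dilation // (power_sum_galois eq_card eqJK).
Qed.

End PowerSums.

Lemma big_enum_nth (R : nmodType) (T : finType) (A : {set T}) d x0 (F : T -> R) :
  #|A| = d -> \sum_(i < d) F (nth x0 (enum A) i) = \sum_(x in A) F x.
Proof. by move=> <-; rewrite -[RHS]big_enum (big_nth x0) -cardE big_mkord. Qed.

Lemma sum_inj_indicator (R : pzRingType) (T : finType) (U : eqType) (f : T -> U)
    (A : {set T}) (G : T -> R) x0 :
  injective f -> x0 \in A -> \sum_(x in A) (f x0 == f x)%:R * G x = G x0.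
Proof.
move=> f_inj x0A; rewrite (bigD1 x0) //= eqxx mul1r big1 ?addr0 // => x /andP[_ x_neq].
by rewrite (inj_eq f_inj) eq_sym (negPf x_neq) mul0r.
Qed.

Lemma ndvdn_mul_pred_add (p a b : nat) :
  (a < p)%N -> (b < p)%N -> a != b -> ~~ (p %| a * p.-1 + b)%N.
Proof.
move=> a_lt b_lt a_neq_b; apply/negP => /dvdnP [k ek]; move/eqP: a_neq_b; apply.
case: p a_lt b_lt ek => [|q] //= a_lt b_lt ek.
have e : (k * q.+1 + a = a * q.+1 + b)%N by rewrite -ek mulnS; lia.
have : (k <= a)%N by nia.
have : (a <= k)%N by nia.
nia.
Qed.

Section Frames.
Variable n : nat.
Local Notation p := n.+2.
Hypothesis p_pr : prime p.
Local Notation w := (omega p).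
Local Open Scope sesquilinear_scope.

Lemma harm_vecE (J : {set 'I_p}) d (k : 'I_p) (i : 'I_d) j : #|J| = d ->
  harm_vec d J k i j = w ^+ (nth ord0 (enum J) i * k).
Proof. by move=> cardJ; rewrite mxE (nth_map ord0) // -cardE cardJ. Qed.

Lemma harm_vec_dot (J : {set 'I_p}) d (a b : 'I_p) : #|J| = d ->
  ((harm_vec d J a)^t* *m harm_vec d J b) 0 0 = power_sum J (a * p.-1 + b).
Proof.
move=> cardJ; rewrite mxE /power_sum -(big_enum_nth ord0 _ cardJ).
apply: eq_bigr => i _; rewrite !mxE (conj_omega_expr p_pr) -exprD.
by rewrite (nth_map ord0) -?cardE ?cardJ // mulnDr mulnA.
Qed.

Lemma unit_equiv_power_sum1 (J K : {set 'I_p}) d : #|J| = d -> #|K| = d ->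
  unit_equiv (harm_vec d J) (harm_vec d K) ->
  exists2 a : 'I_p, a \is a GRing.unit & power_sum J 1 = power_sum K a.
Proof.
move=> cardJ cardK [U [s [U_unitary eqJK]]].
(* Compare the Gram entries <v_0, v_1> of both frames; for Phi_K they become
   <w_(s 0), w_(s 1)>, a power sum of K at s 1 - s 0 = s 0 * (p - 1) + s 1. *)
have UU : U^t* *m U = 1%:M.
  by move: U_unitary; rewrite -trmxC_unitary => /unitarymxP; rewrite trmxCK.
pose one : 'I_p := inord 1.
have one_val : one = 1%N :> nat by rewrite inordK.
have := congr1 (fun M => ((harm_vec d J ord0)^t* *m M) 0 0) (eqJK one).
rewrite /= harm_vec_dot // {1}eqJK trmx_mul map_mxM -mulmxA (mulmxA _ U) UU mul1mx.
rewrite harm_vec_dot // one_val mul0n add0n => ->.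
set c := (s ord0 * p.-1 + s one)%N.
exists (inZp c); last by apply: eq_power_sum_mod => //=; rewrite modn_mod.
have s_neq : nat_of_ord (s ord0) != s one.
  by rewrite val_eqE (inj_eq perm_inj) -val_eqE /= one_val.
rewrite (unit_Zp_prime p_pr).
apply: contraNneq (ndvdn_mul_pred_add (ltn_ord (s ord0)) (ltn_ord (s one)) s_neq).
by move/(congr1 val) => /= /eqP; rewrite /dvdn.
Qed.

Lemma dilation_unit_equiv (K : {set 'I_p}) d (a : 'I_p) :
  a \is a GRing.unit -> #|K| = d ->
  unit_equiv (harm_vec d [set y * a | y in K]) (harm_vec d K).
Proof.
move=> a_unit cardK; set J := [set y * a | y in K].
have mula_inj : injective (fun y : 'I_p => y * a) by apply: mulIr.
have cardJ : #|J| = d by rewrite card_imset.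
pose eJ (i : 'I_d) := nth ord0 (enum J) i; pose eK (j : 'I_d) := nth ord0 (enum K) j.
have eJ_dil (i : 'I_d) : exists2 y, y \in K & eJ i = y * a.
  have : eJ i \in J by rewrite -mem_enum mem_nth // -cardE cardJ.
  by case/imsetP=> y yK ->; exists y.
pose U : 'M[algC]_d := \matrix_(i, j) (eJ i == eK j * a)%:R.
have U_row (i : 'I_d) y (G : 'I_p -> algC) :
    eJ i = y * a -> y \in K -> \sum_j (eJ i == eK j * a)%:R * G (eK j) = G y.
  move=> eJi yK; rewrite eJi (big_enum_nth ord0 (fun z => (y * a == z * a)%:R * G z) cardK).
  exact: (sum_inj_indicator _ mula_inj).
exists U, (perm (mulrI a_unit)); split.
  apply/unitarymxP/matrixP => i j; rewrite !mxE.
  under eq_bigr do rewrite !mxE conjC_nat.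
  have [y yK eJi] := eJ_dil i.
  rewrite (U_row i y (fun z => (eJ j == z * a)%:R)) // -eJi.
  by rewrite /eJ nth_uniq ?enum_uniq -?cardE ?cardJ // eq_sym.
move=> k; apply/matrixP => i j; rewrite harm_vecE // !mxE.
under eq_bigr do rewrite !mxE (nth_map ord0) -?cardE ?cardK //.
have [y yK eJi] := eJ_dil i.
rewrite (U_row i y (fun z => w ^+ (z * _))) // -/(eJ i) eJi permE.
apply/eqP; rewrite (eq_prim_root_expr (omega_prim p_pr)) /=.
by rewrite modnMml modnMmr mulnA.
Qed.

End Frames.

Section CyclicOrders.
Local Open Scope group_scope.
Variables (gT : finGroupType) (G : {group gT}).
Hypothesis G_cyclic : cyclic G.

Lemma card_elements_of_order j :
  (j %| #|G|)%N -> #|[set x in G | #[x] == j]| = totient j.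
Proof.
case/cyclicP: (G_cyclic) => a defG j_dvd.
have oa : #[a] = #|G| by rewrite defG.
have j_dvd_a : (j %| #[a])%N by rewrite oa.
set y := a ^+ (#[a] %/ j).
have oy : #[y] = j.
  have j_gt0 : (0 < j)%N := dvdn_gt0 (cardG_gt0 G) j_dvd.
  have quot_dvd : (#[a] %/ j %| #[a])%N by rewrite -{2}(divnK j_dvd_a) dvdn_mulr.
  by rewrite orderXdiv // -{1}(divnK j_dvd_a) mulKn // divn_gt0 // dvdn_leq // oa.
have yG : y \in G by rewrite groupX // defG cycle_id.
rewrite -oy totient_gen; apply: eq_card => x; rewrite !inE /generator.
apply/andP/idP => [[xG /eqP ox]|gen_x].
  by rewrite (eq_subG_cyclic G_cyclic) ?cycle_subG // -!/(order _) ox oy.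
have xy : <[x]> = <[y]> by apply/esym/eqP.
by rewrite -cycle_subG xy cycle_subG yG /order xy.
Qed.

Lemma sum_order_cyclic (F : nat -> nat) :
  (\sum_(x in G) F #[x] = \sum_(j <- divisors #|G|) totient j * F j)%N.
Proof.
transitivity (\sum_(x in G) \sum_(j <- divisors #|G|) (#[x] == j) * F j)%N.
  apply: eq_bigr => x xG.
  rewrite (bigD1_seq #[x]) ?divisors_uniq //= ?eqxx ?mul1n; last first.
    by rewrite -dvdn_divisors ?cardG_gt0 ?order_dvdG.
  by rewrite big1_seq ?addn0 // => j /andP[nj _]; rewrite eq_sym (negPf nj).
rewrite exchange_big /=; apply: eq_big_seq => j; rewrite -dvdn_divisors ?cardG_gt0 // => jG.
rewrite -(card_elements_of_order jG) -big_distrl /=; congr (_ * _)%N.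
rewrite -sum1_card big_mkcond [RHS]big_mkcond /=; apply: eq_bigr => x _.
by rewrite !inE; case: (x \in G); case: (#[x] == j).
Qed.

End CyclicOrders.

Section PartitionCover.
Variables (T : finType) (P : {set {set T}}).
Hypotheses (P_triv : trivIset P) (P_set0 : set0 \notin P).

Lemma cover_inj : {in [set Q : {set {set T}} | Q \subset P] &, injective cover}.
Proof.
suff coverK (Q : {set {set T}}) : Q \subset P -> Q = [set B in P | B \subset cover Q].
  by move=> Q1 Q2; rewrite !inE => /coverK {2}-> /coverK {2}-> <-.
move=> QP; apply/setP => B; rewrite inE; apply/idP/andP => [BQ|[BP Bs]].
  by split; [exact: (subsetP QP) | exact: bigcup_sup].
have /set0Pn [x xB] : B != set0 by apply: contraNneq P_set0 => <-.
have /bigcupP [B' B'Q xB'] := subsetP Bs x xB.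
by rewrite -(def_pblock P_triv BP xB) (def_pblock P_triv (subsetP QP _ B'Q) xB').
Qed.

Lemma card_cover_uniform (Q : {set {set T}}) o :
  {in P, forall B : {set T}, #|B| = o} -> Q \subset P -> #|cover Q| = (#|Q| * o)%N.
Proof.
move=> cardP QP; apply: card_uniform_partition => [B BQ|]; first exact/cardP/(subsetP QP).
rewrite /partition eqxx (trivIsetS QP P_triv) /=.
by apply: contra P_set0; apply: (subsetP QP).
Qed.

End PartitionCover.

Definition nblock_unions (N j e : nat) : nat :=
  if (j %| e)%N then 'C(N %/ j, e %/ j) else 0%N.

Section UnitAction.
Variable n : nat.
Local Notation p := n.+2.
Hypothesis p_pr : prime p.
Local Notation G := [set: {unit 'I_p}].
Local Notation toU := (FinRing.unit_action 'I_p).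
Local Notation toS := (set_action toU).

Lemma unlifted_setsE e (S : {set 'I_p}) :
  (S \in unlifted_sets p e) = (#|S| == e) && (0 \notin S).
Proof.
rewrite inE; congr (_ && _); apply/forallP/idP => [S0 | S0 i].
  by apply/negP => /(implyP (S0 0)).
by apply/implyP => iS; apply: contraNneq S0 => i0; rewrite -(@val_inj _ _ _ i 0 i0).
Qed.

Lemma lifted_setsE e (S : {set 'I_p}) :
  (S \in lifted_sets p e) = (#|S| == e) && (0 \in S).
Proof.
rewrite inE; congr (_ && _); apply/existsP/idP => [[i /andP[iS /eqP i0]]|S0].
  by rewrite -(@val_inj _ _ _ i 0 i0).
by exists 0; rewrite S0.
Qed.

Lemma setact_unitE (S : {set 'I_p}) (u : {unit 'I_p}) :
  toS S u = [set x * val u | x in S].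
Proof. by []. Qed.

Lemma setact_notin0 (S : {set 'I_p}) u : 0 \notin S -> 0 \notin toS S u.
Proof.
move=> S0; apply/imsetP => [[x xS /esym/eqP]].
rewrite /= FinRing.unit_actE (mulIr_eq0 _ (mulIr (valP u))) => /eqP x0.
by rewrite -x0 xS in S0.
Qed.

Lemma setact_setU1_0 (S : {set 'I_p}) u : toS (0 |: S) u = 0 |: toS S u.
Proof. by rewrite /= /setact imsetU1 /= FinRing.unit_actE mul0r. Qed.

Lemma acts_unlifted e : [acts G, on unlifted_sets p e | toS].
Proof.
apply/subsetP => u _; rewrite !inE /=; apply/subsetP => S.
rewrite [in X in _ -> X]inE /= !unlifted_setsE card_setact.
by case/andP=> -> /setact_notin0 ->.
Qed.

Lemma acts_lifted e : [acts G, on lifted_sets p e | toS].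
Proof.
apply/subsetP => u _; rewrite !inE /=; apply/subsetP => S.
rewrite [in X in _ -> X]inE /= !lifted_setsE card_setact => /andP[-> S0] /=.
by rewrite -(setD1K S0) setact_setU1_0 setU11.
Qed.

Section OneUnit.
Local Open Scope group_scope.
Variable u : {unit 'I_p}.

Definition unit_orbits := orbit toU <[u]> @: [set~ (0 : 'I_p)].

Lemma partition_unit_orbits : partition unit_orbits [set~ 0].
Proof.
apply: orbit_partition; apply/subsetP => h _; rewrite !inE /=.
apply/subsetP => x; rewrite !inE /= FinRing.unit_actE.
by rewrite (mulIr_eq0 _ (mulIr (valP h))).
Qed.

Lemma card_unit_orbit B : B \in unit_orbits -> #|B| = #[u].
Proof.
case/imsetP=> x; rewrite !inE => x_neq0 ->; rewrite card_orbit.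
suff -> : 'C_<[u]>[x | toU] = 1 by rewrite indexg1.
apply/trivgP/subsetP => h /setIP[_ /astab1P /= hx]; rewrite inE.
have x_unit : x \is a GRing.unit by rewrite unit_Zp_prime.
by apply/eqP/val_inj/(mulrI x_unit); rewrite mulr1.
Qed.

Lemma card_unit_orbits : (#|unit_orbits| * #[u])%N = p.-1.
Proof.
rewrite -(card_uniform_partition card_unit_orbit partition_unit_orbits).
by rewrite cardsC1 card_ord.
Qed.

Lemma fix_unlifted_cover e :
  'Fix_(unlifted_sets p e | toS)[u] =
    cover @: [set Q : {set {set 'I_p}} | Q \subset unit_orbits & (#|Q| * #[u] == e)%N].
Proof.
have [triv_orbits orbits_set0] : trivIset unit_orbits /\ set0 \notin unit_orbits.
  by case/and3P: partition_unit_orbits.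
have card_cover := card_cover_uniform triv_orbits orbits_set0 card_unit_orbit.
apply/setP => S; rewrite inE; apply/idP/imsetP => [/andP[] | [Q]].
  rewrite unlifted_setsE => /andP[/eqP cardS S0] /afix1P fixS.
  have S_stable : [acts <[u]>, on S | toU].
    rewrite cycle_subG !inE /=; apply/subsetP => x xS; rewrite inE -fixS.
    exact: mem_setact.
  have partS := orbit_partition S_stable.
  have orbitsS : orbit toU <[u]> @: S \subset unit_orbits.
    by apply: imsetS; apply/subsetP => x xS; rewrite !inE; apply: contraNneq S0 => <-.
  exists (orbit toU <[u]> @: S); last by rewrite (cover_partition partS).
  by rewrite inE orbitsS -card_cover // (cover_partition partS) cardS /=.
rewrite inE => /andP[QP cardQ] ->; rewrite unlifted_setsE card_cover // cardQ /=.
apply/andP; split.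
  have coverQ : cover Q \subset [set~ 0].
    rewrite -(cover_partition partition_unit_orbits); apply/bigcupsP => B BQ.
    exact/bigcup_sup/(subsetP QP).
  by apply/negP => /(subsetP coverQ); rewrite !inE eqxx.
apply/afix1P/astabs_setact; rewrite !inE /=.
apply/subsetP => x /bigcupP[B BQ xB]; rewrite inE /=; apply/bigcupP; exists B => //.
have /imsetP [y _ defB] := subsetP QP _ BQ.
move: xB; rewrite defB => /orbitP [h hu <-].
by rewrite -actM /= mem_orbit // groupM // cycle_id.
Qed.

Lemma card_fix_unlifted e :
  #|'Fix_(unlifted_sets p e | toS)[u]| = nblock_unions p.-1 #[u] e.
Proof.
have [triv_orbits orbits_set0] : trivIset unit_orbits /\ set0 \notin unit_orbits.
  by case/and3P: partition_unit_orbits.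
rewrite fix_unlifted_cover card_in_imset; last first.
  move=> Q1 Q2; rewrite !inE => /andP[Q1P _] /andP[Q2P _].
  by apply: (cover_inj triv_orbits orbits_set0); rewrite inE.
rewrite /nblock_unions; case: ifPn => [u_dvd_e|u_ndvd_e].
  rewrite -card_unit_orbits mulnK ?order_gt0 // -cards_draws.
  by apply: eq_card => Q; rewrite !inE -{1}(divnK u_dvd_e) eqn_pmul2r ?order_gt0.
apply: eq_card0 => Q; rewrite !inE; apply/negP => /andP[_ /eqP cardQ].
by rewrite -cardQ dvdn_mull in u_ndvd_e.
Qed.

End OneUnit.

Lemma card_fix_lifted u e :
  #|'Fix_(lifted_sets p e.+1 | toS)[u]%g| = #|'Fix_(unlifted_sets p e | toS)[u]%g|.
Proof.
have fixS0 (S : {set 'I_p}) : 0 \notin S ->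
    (S \in 'Fix_toS[u]%g) = (0 |: S \in 'Fix_toS[u]%g).
  move=> S0; apply/afix1P/afix1P => [fixS|]; first by rewrite setact_setU1_0 fixS.
  by rewrite setact_setU1_0 => /(congr1 (fun A => A :\ 0)); rewrite !setU1K ?setact_notin0.
rewrite -[RHS](card_in_imset (f := fun S : {set 'I_p} => 0 |: S)); last first.
  move=> S1 S2; rewrite !in_setI !unlifted_setsE.
  move=> /andP[/andP[_ S10] _] /andP[/andP[_ S20] _] /(congr1 (fun A => A :\ 0)).
  by rewrite !setU1K.
apply: eq_card => S; apply/idP/imsetP => [/setIP[] | [S' /setIP[] + fixS' ->]].
  rewrite lifted_setsE => /andP[cardS S0] fixS; exists (S :\ 0); last by rewrite setD1K.
  move: cardS; rewrite (cardsD1 0) S0 add1n eqSS => cardS.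
  by apply/setIP; rewrite unlifted_setsE cardS setD11 fixS0 ?setD11 ?setD1K.
rewrite unlifted_setsE => /andP[cardS' S'0]; apply/setIP.
by rewrite lifted_setsE cardsU1 S'0 (eqP cardS') add1n eqxx setU11 -fixS0.
Qed.

Lemma sum_divisors_block_unions N e : (0 < N)%N ->
  (\sum_(j <- divisors N) totient j * nblock_unions N j e =
   \sum_(j <- divisors (gcdn N e)) 'C(N %/ j, e %/ j) * totient j)%N.
Proof.
move=> N_gt0; rewrite /nblock_unions.
pose F j := if (j %| e)%N then 'C(N %/ j, e %/ j) * totient j else 0%N.
rewrite (eq_bigr F) => [|j _]; last by rewrite /F; case: ifP; rewrite ?muln0 // mulnC.
rewrite -big_mkcond /= -big_filter; apply: perm_big.
apply: uniq_perm; rewrite ?filter_uniq ?divisors_uniq // => j.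
by rewrite mem_filter -!dvdn_divisors ?gcdn_gt0 ?N_gt0 // dvdn_gcd andbC.
Qed.

Lemma card_orbits_units (S : {set {set 'I_p}}) e :
  [acts G, on S | toS] ->
  (forall u, #|'Fix_(S | toS)[u]%g| = nblock_unions p.-1 #[u]%g e) ->
  (#|orbit toS G @: S| * p.-1 =
   \sum_(j <- divisors (gcdn p.-1 e)) 'C(p.-1 %/ j, e %/ j) * totient j)%N.
Proof.
move=> actsS cardFix.
have cardG : #|G| = p.-1 by rewrite (card_units_Zp (isT : (0 < p)%N)) totient_prime.
rewrite -{1}cardG -Frobenius_Cauchy // (eq_bigr _ (fun u _ => cardFix u)).
have G_cyclic : cyclic G := units_Zp_cyclic p_pr.
rewrite (sum_order_cyclic G_cyclic (nblock_unions p.-1 ^~ e)) cardG.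
exact: sum_divisors_block_unions.
Qed.

End UnitAction.

Section Classes.
Variable n : nat.
Local Notation p := n.+2.
Hypothesis p_pr : prime p.
Local Notation G := [set: {unit 'I_p}].
Local Notation toS := (set_action (FinRing.unit_action 'I_p)).

Lemma frame_equivE (J K : {set 'I_p}) d : #|J| = d -> #|K| = d ->
  frame_equiv d J K = (J \in orbit toS G K).
Proof.
move=> cardJ cardK; rewrite /frame_equiv /asbool.
case: excluded_middle_informative => [equiv | nequiv]; apply/esym.
  have [a a_unit eqJK] := unit_equiv_power_sum1 p_pr cardJ cardK equiv.
  apply/orbitP; exists (FinRing.unit 'I_p a_unit); rewrite ?inE // setact_unitE.
  by rewrite (eq_power_sum1_dilation p_pr a_unit _ eqJK) // cardJ cardK.
apply/negP => /orbitP [u _ defJ]; apply: nequiv; rewrite -defJ setact_unitE.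
by apply: (dilation_unit_equiv p_pr _ cardK); apply: valP.
Qed.

Lemma num_classesE (S : {set {set 'I_p}}) d :
  [acts G, on S | toS] -> {in S, forall J : {set 'I_p}, #|J| = d} ->
  num_classes d S = #|orbit toS G @: S|.
Proof.
move=> actsS cardS; rewrite /num_classes.
suff -> : [set [set K in S | frame_equiv d J K] | J in S] = orbit toS G @: S by [].
apply: eq_in_imset => J JS; apply/setP => K; rewrite inE.
have [KS|KS] := boolP (K \in S); first by rewrite frame_equivE ?cardS // orbit_sym.
have orbitS : orbit toS G J \subset S by rewrite (acts_sub_orbit J actsS).
by apply/esym/negbTE; apply: contra KS; apply: (subsetP orbitS).
Qed.

End Classes.

Theorem theorem7p2 (p d : nat) (hp : prime p) (hd : (1 < d)%N) :
  (h_unlifted p d)%:R = hformula p d :> rat /\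
  (h_lifted p d)%:R = hformula p d.-1 :> rat.
Proof.
case: p hp => [|[|n]] p_pr //.
have count_rat (h s : nat) : (h * n.+1)%N = s -> h%:R = (n.+1%:R)^-1 * s%:R :> rat.
  by move=> <-; rewrite natrM mulrC mulfK ?pnatr_eq0.
rewrite /h_unlifted /h_lifted /hformula -!natr_sum; split.
  rewrite (num_classesE p_pr (acts_unlifted _ _)) => [|J]; last first.
    by rewrite unlifted_setsE => /andP[/eqP].
  apply/count_rat/(card_orbits_units p_pr (acts_unlifted _ _)) => u.
  exact: card_fix_unlifted.
case: d hd => [|e] // _.
rewrite (num_classesE p_pr (acts_lifted _ _)) => [|J]; last first.
  by rewrite lifted_setsE => /andP[/eqP].
apply/count_rat/(card_orbits_units p_pr (acts_lifted _ _)) => u.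
by rewrite card_fix_lifted card_fix_unlifted.
Qed.
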